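(* Let $D>0$, let $M,L,p\in\mathbb{N}$ with $L\geq 1$, $M\geq 1$ and $p\geq 2$, and let $X=[0,D]^M$ with the Euclidean distance $d$. Endow $X^p$ with the maximum metric $d_{\max}((x_1,\dots,x_p),(y_1,\dots,y_p))=\max_{1\le j\le p} d(x_j,y_j)$. Let $f_1,\dots,f_L:X^p\to X$ be contractions, i.e. Lipschitz maps with respect to $d_{\max}$ and $d$ with Lipschitz constants $\mathrm{lip}(f_i)<1$, and put $C=\max\{\mathrm{lip}(f_1),\dots,\mathrm{lip}(f_L)\}<1$. Let $A_{\mathcal{F}}$ be the unique nonempty compact set $A\subseteq X$ satisfying $A=\bigcup_{i=1}^{L} f_i(A\times\cdots\times A)$ ($p$ factors). Let $(n_k)_{k\ge 1}$ be a sequence of positive integers and put $\varepsilon_k=\frac{D\sqrt{M}}{n_k}$. Let $K_0\subseteq X$ be a nonempty finite set, put $\tilde A_0=K_0$ and, for $k\ge 1$, $$\tilde A_k=\Big\{\tfrac{D}{n_k}\Big[\tfrac{n_k}{D}f_l(u_1,\dots,u_p)\Big] \;\Big|\; u_1,\dots,u_p\in\tilde A_{k-1},\ l\in\{1,\dots,L\}\Big\},$$ where for $x=(x_1,\dots,x_M)\in\mathbb{R}^M$ we write $[x]=([x_1],\dots,[x_M])$, with $[t]$ the greatest integer $\le t$. Then for every $k\in\mathbb{N}$, $k\ge 1$, $$h(\tilde A_k,A_{\mathcal{F}})\le \varepsilon_k+C\varepsilon_{k-1}+C^2\varepsilon_{k-2}+\cdots+C^{k-1}\varepsilon_1+C^k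 D\sqrt{M},$$ where $h$ denotes the Hausdorff–Pompeiu metric on nonempty compact subsets of $X$.
   Context: For nonempty compact $K_1,K_2\subseteq X$, $d(K_1,K_2)=\sup_{x\in K_1}\inf_{y\in K_2}d(x,y)$ and the Hausdorff–Pompeiu distance is $h(K_1,K_2)=\max\{d(K_1,K_2),d(K_2,K_1)\}$. The sets $\tilde A_k$ are the successive outputs of the ''grid algorithm'': at each step every map $f_l$ is applied to all $p$-tuples of points from the previous set, and each resulting point is replaced by the lower-left corner of the cell of the grid of mesh $D/n_k$ containing it. *)

From HB Require Import structures.
From mathcomp Require Import all_boot all_order all_algebra.
From mathcomp Require Import all_classical all_reals all_analysis.
Set Implicit Arguments. Unset Strict Implicit. Unset Printing Implicit Defensive.
Import Order.TTheory GRing.Theory Num.Theory.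
Import numFieldNormedType.Exports.
Local Open Scope classical_set_scope.
Local Open Scope ring_scope.

Section Defs.
Variables (R : realType) (M p : nat).

Definition pt := 'rV[R]_M.

Definition edist (x y : pt) : R := Num.sqrt (\sum_(i < M) (x ord0 i - y ord0 i) ^+ 2).

Definition cube (D : R) : set pt := [set x | forall i, 0 <= x ord0 i <= D].

Definition dmax (u v : 'I_p -> pt) : R := \big[Num.max/0]_(j < p) edist (u j) (v j).

Definition tuples (A : set pt) : set ('I_p -> pt) := [set u | forall j, A (u j)].

Definition lipc_on (D : R) (f : ('I_p -> pt) -> pt) (c : R) : Prop :=
  0 <= c /\ forall u v, tuples (cube D) u -> tuples (cube D) v ->
    edist (f u) (f v) <= c * dmax u v.

Definition liprate (D : R) (f : ('I_p -> pt) -> pt) : R := inf [set c | lipc_on D f c].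

Definition exc (K1 K2 : set pt) : R :=
  sup [set inf [set edist x y | y in K2] | x in K1].
Definition hausdorff (K1 K2 : set pt) : R := Num.max (exc K1 K2) (exc K2 K1).

Definition grid (D : R) (n : nat) (x : pt) : pt :=
  \row_(i < M) (D / n%:R * (Num.floor (n%:R / D * x ord0 i))%:~R).

Fixpoint Atil (L : nat) (f : 'I_L -> ('I_p -> pt) -> pt) (D : R) (n : nat -> nat)
  (K0 : set pt) (k : nat) : set pt :=
  match k with
  | 0 => K0
  | k'.+1 => [set y | exists (l : 'I_L) (u : 'I_p -> pt),
                tuples (Atil f D n K0 k') u /\ y = grid D (n k'.+1) (f l u)]
  end.

End Defs.

From Pilot Require Import Defs.
From HB Require Import structures.
From mathcomp Require Import all_boot all_order all_algebra.
From mathcomp Require Import all_classical all_reals all_analysis.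
From mathcomp Require Import ring lra.
Set Implicit Arguments. Unset Strict Implicit. Unset Printing Implicit Defensive.
Import Order.TTheory GRing.Theory Num.Theory.
Import numFieldNormedType.Exports.
Local Open Scope classical_set_scope.
Local Open Scope ring_scope.

(* Rounding to the grid of mesh D/n_k moves every point by at most eps_k, so one
   step of the algorithm is the Hutchinson operator of the maps grid o f_l, each
   within eps_k of f_l.  Since the f_l are C-Lipschitz for the maximum metric, the
   Hutchinson operators of two such families change Hausdorff distances by at
   most eps + C h; as A is the fixed point of the operator of the f_l, this gives
   h(A_k, A) <= eps_k + C h(A_(k-1), A), with h(A_0, A) <= D sqrt M, the diameter
   of X.  Unfolding this affine recurrence yields the bound. *)

Section CauchySchwarz.
Variables (R : rcfType) (n : nat).
Implicit Types a b : 'I_n -> R.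

Lemma CauchySchwarz_sum a b :
  (\sum_i a i * b i) ^+ 2 <= (\sum_i a i ^+ 2) * (\sum_i b i ^+ 2).
Proof.
have lagrange : \sum_i \sum_j (a i * b j - a j * b i) ^+ 2 =
    ((\sum_i a i ^+ 2) * (\sum_i b i ^+ 2) - (\sum_i a i * b i) ^+ 2) *+ 2.
  have sym : \sum_i \sum_j a i ^+ 2 * b j ^+ 2 = \sum_i \sum_j a j ^+ 2 * b i ^+ 2.
    by rewrite exchange_big.
  rewrite mulrnBl expr2 !big_distrlr /= mulr2n {2}sym -big_split /=.
  rewrite -sumrMnl -sumrB; apply: eq_bigr => i _.
  rewrite -big_split -sumrMnl -sumrB; apply: eq_bigr => j _ /=; ring.
have : 0 <= \sum_i \sum_j (a i * b j - a j * b i) ^+ 2.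
  by do 2!apply: sumr_ge0 => ? _; apply: sqr_ge0.
by rewrite lagrange pmulrn_lge0 // subr_ge0.
Qed.

Lemma CauchySchwarz_sum_sqrt a b :
  \sum_i a i * b i <= Num.sqrt (\sum_i a i ^+ 2) * Num.sqrt (\sum_i b i ^+ 2).
Proof.
rewrite -sqrtrM; last by apply: sumr_ge0 => i _; apply: sqr_ge0.
by rewrite (le_trans (ler_norm _)) // -sqrtr_sqr ler_wsqrtr // CauchySchwarz_sum.
Qed.

End CauchySchwarz.

Section EuclideanDistance.
Variables (R : realType) (M : nat).
Local Notation pt := (pt R M).
Local Notation edist := (@Defs.edist R M).
Implicit Types x y z : pt.

Lemma edist_ge0 x y : 0 <= edist x y.
Proof. exact: sqrtr_ge0. Qed.

Lemma edist_sym x y : edist x y = edist y x.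
Proof. by rewrite /Defs.edist; congr Num.sqrt; apply: eq_bigr => i _; rewrite -sqrrN opprB. Qed.

Lemma edist_triangle x y z : edist x z <= edist x y + edist y z.
Proof.
rewrite /Defs.edist; set a := fun i => x ord0 i - y ord0 i.
set b := fun i => y ord0 i - z ord0 i.
have -> : \sum_(i < M) (x ord0 i - z ord0 i) ^+ 2 = \sum_i (a i + b i) ^+ 2.
  by apply: eq_bigr => i _; rewrite /a /b subrKA.
change (Num.sqrt (\sum_i (a i + b i) ^+ 2) <=
  Num.sqrt (\sum_i a i ^+ 2) + Num.sqrt (\sum_i b i ^+ 2)).
have sq_ge0 (c : 'I_M -> R) : 0 <= \sum_i c i ^+ 2 by apply: sumr_ge0 => i _; apply: sqr_ge0.
rewrite -[_ + _]ger0_norm ?addr_ge0 ?sqrtr_ge0 // -sqrtr_sqr ler_wsqrtr //.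
rewrite sqrrD !sqr_sqrtr //.
have -> : \sum_i (a i + b i) ^+ 2 =
    \sum_i a i ^+ 2 + (\sum_i a i * b i) *+ 2 + \sum_i b i ^+ 2.
  by rewrite -sumrMnl -!big_split; apply: eq_bigr => i _; rewrite sqrrD.
by rewrite lerD2r lerD2l ler_pMn2r // CauchySchwarz_sum_sqrt.
Qed.

Lemma edist_le_coord x y (r : R) : 0 <= r ->
  (forall i, `|x ord0 i - y ord0 i| <= r) -> edist x y <= r * Num.sqrt M%:R.
Proof.
move=> r_ge0 xy_le; rewrite -[r]ger0_norm // -sqrtr_sqr -sqrtrM ?sqr_ge0 //.
rewrite ler_wsqrtr // mulr_natr -[in X in _ <= X](card_ord M) -sumr_const.
by apply: ler_sum => i _; rewrite -real_normK ?num_real // lerXn2r ?nnegrE ?xy_le.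
Qed.

Lemma edist_cube_le (D : R) x y : 0 <= D -> cube D x -> cube D y ->
  edist x y <= D * Num.sqrt M%:R.
Proof.
move=> D_ge0 cx cy; apply: edist_le_coord => // i.
by move: (cx i) (cy i) => /andP[? ?] /andP[? ?]; rewrite ler_norml; apply/andP; split; lra.
Qed.

Lemma floor_step_bounds (s t : R) : 0 < s ->
  s * (Num.floor (s^-1 * t))%:~R <= t < s * (Num.floor (s^-1 * t))%:~R + s.
Proof.
move=> s_gt0; have sK : s * (s^-1 * t) = t by rewrite mulVKf ?gt_eqF.
have := floorD1_gt (s^-1 * t); rewrite -(ltr_pM2l s_gt0) sK intrD mulrDr mulr1 => ->.
by rewrite -[X in _ <= X]sK ler_pM2l ?floor_le.
Qed.

Lemma grid_coord (D : R) m x i :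
  grid D m x ord0 i = D / m%:R * (Num.floor ((D / m%:R)^-1 * x ord0 i))%:~R.
Proof. by rewrite mxE invf_div. Qed.

Lemma grid_cube (D : R) m x : 0 < D -> (0 < m)%N -> cube D x -> cube D (grid D m x).
Proof.
move=> D_gt0 m_gt0 cx i; have /andP[xi_ge0 xi_leD] := cx i.
have s_gt0 : 0 < D / m%:R by rewrite divr_gt0 ?ltr0n.
have /andP[le_x _] := floor_step_bounds (x ord0 i) s_gt0.
have floor_ge0 : 0 <= Num.floor ((D / m%:R)^-1 * x ord0 i).
  by rewrite floor_ge0 mulr_ge0 // invr_ge0 ltW.
rewrite grid_coord; apply/andP; split; last exact: le_trans le_x xi_leD.
by rewrite mulr_ge0 ?ler0z // ltW.
Qed.

Lemma edist_grid_le (D : R) m x : 0 < D -> (0 < m)%N ->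
  edist (grid D m x) x <= D * Num.sqrt M%:R / m%:R.
Proof.
move=> D_gt0 m_gt0; have s_gt0 : 0 < D / m%:R by rewrite divr_gt0 ?ltr0n.
rewrite mulrAC; apply: edist_le_coord => [|i]; first exact: ltW.
have /andP[le_x lt_x] := floor_step_bounds (x ord0 i) s_gt0.
by rewrite grid_coord distrC ger0_norm ?subr_ge0 // lerBlDl ltW.
Qed.

End EuclideanDistance.

Section Hausdorff.
Variables (R : realType) (M : nat).
Local Notation pt := (pt R M).
Local Notation edist := (@Defs.edist R M).
Implicit Types (x y : pt) (K : set pt).

Definition edist_set x K : R := inf [set edist x y | y in K].

Definition edist_bounded K1 K2 (B : R) := forall x y, K1 x -> K2 y -> edist x y <= B.

Lemma edist_bounded_sym K1 K2 B : edist_bounded K1 K2 B -> edist_bounded K2 K1 B.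
Proof. by move=> bdd x y K2x K1y; rewrite edist_sym bdd. Qed.

Lemma edist_bounded_cube K1 K2 D : 0 <= D -> K1 `<=` cube D -> K2 `<=` cube D ->
  edist_bounded K1 K2 (D * Num.sqrt M%:R).
Proof. by move=> D_ge0 c1 c2 x y K1x K2y; apply: edist_cube_le; [|exact: c1|exact: c2]. Qed.

Lemma edist_set_le x y K : K y -> edist_set x K <= edist x y.
Proof.
by move=> Ky; apply: ge_inf; [exists 0 => _ [z _ <-]; exact: edist_ge0 | exists y].
Qed.

Lemma edist_set_ge0 x K : K !=set0 -> 0 <= edist_set x K.
Proof.
move=> [y Ky]; apply: lb_le_inf; first by exists (edist x y), y.
by move=> _ [z _ <-]; exact: edist_ge0.
Qed.

Lemma edist_set_approx x K e : K !=set0 -> 0 < e ->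
  exists2 y, K y & edist x y < edist_set x K + e.
Proof.
move=> [y0 Ky0] e_gt0; have inf_K : has_inf [set edist x y | y in K].
  by split; [exists (edist x y0), y0 | exists 0 => _ [z _ <-]; exact: edist_ge0].
by have [_ [y Ky <-]] := inf_adherent e_gt0 inf_K; exists y.
Qed.

Lemma edist_set_le_near x K B :
  (forall e, 0 < e -> exists2 y, K y & edist x y <= B + e) -> edist_set x K <= B.
Proof.
move=> near; apply/ler_addgt0Pr => e /near[y Ky le_xy].
exact: le_trans (edist_set_le x Ky) le_xy.
Qed.

Lemma edist_set_le_exc K1 K2 B x : edist_bounded K1 K2 B -> K2 !=set0 -> K1 x ->
  edist_set x K2 <= exc K1 K2.
Proof.
move=> bdd [y0 K2y0] K1x; apply: ub_le_sup; last by exists x.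
exists B => _ [z K1z <-]; exact: le_trans (edist_set_le z K2y0) (bdd _ _ K1z K2y0).
Qed.

Lemma exc_le K1 K2 B : 0 <= B -> (forall x, K1 x -> edist_set x K2 <= B) ->
  exc K1 K2 <= B.
Proof.
move=> B_ge0 le_B; have [->|/set0P[x K1x]] := eqVneq K1 set0.
  by rewrite /exc image_set0 sup0.
by apply: ge_sup; [exists (edist_set x K2), x | move=> _ [z K1z <-]; exact: le_B].
Qed.

Lemma exc_ge0 K1 K2 B : edist_bounded K1 K2 B -> K2 !=set0 -> 0 <= exc K1 K2.
Proof.
move=> bdd K2n0; have [->|/set0P[x K1x]] := eqVneq K1 set0.
  by rewrite /exc image_set0 sup0.
exact: le_trans (edist_set_ge0 x K2n0) (edist_set_le_exc bdd K2n0 K1x).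
Qed.

Lemma exc_approx K1 K2 B x e : edist_bounded K1 K2 B -> K2 !=set0 -> K1 x -> 0 < e ->
  exists2 y, K2 y & edist x y < exc K1 K2 + e.
Proof.
move=> bdd K2n0 K1x e_gt0; have [y K2y lt_xy] := edist_set_approx x K2n0 e_gt0.
by exists y => //; rewrite (lt_le_trans lt_xy) // lerD2r (edist_set_le_exc bdd).
Qed.

Lemma hausdorff_le K1 K2 B : K1 !=set0 -> K2 !=set0 -> edist_bounded K1 K2 B ->
  hausdorff K1 K2 <= B.
Proof.
move=> [x1 K1x1] [x2 K2x2] bdd; have B_ge0 : 0 <= B.
  exact: le_trans (edist_ge0 x1 x2) (bdd _ _ K1x1 K2x2).
rewrite /hausdorff ge_max; apply/andP; split; apply: exc_le => // x Kx.
  exact: le_trans (edist_set_le x K2x2) (bdd _ _ Kx K2x2).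
exact: le_trans (edist_set_le x K1x1) (edist_bounded_sym bdd Kx K1x1).
Qed.

End Hausdorff.

Section Hutchinson.
Variables (R : realType) (M p L : nat).
Local Notation pt := (pt R M).
Local Notation edist := (@Defs.edist R M).
Local Notation dmax := (@Defs.dmax R M p).
Implicit Types (u v : 'I_p -> pt) (K : set pt) (g h : 'I_L -> ('I_p -> pt) -> pt).

Lemma dmax_ge0 u v : 0 <= dmax u v.
Proof. exact: bigmax_ge_id. Qed.

Lemma dmax_sym u v : dmax u v = dmax v u.
Proof. by apply: eq_bigr => j _; rewrite edist_sym. Qed.

Lemma dmax_le u v (B : R) : 0 <= B -> (forall j, edist (u j) (v j) <= B) -> dmax u v <= B.
Proof. by move=> B_ge0 le_B; apply: bigmax_le. Qed.

Definition hutch g K : set pt := [set y | exists l u, tuples K u /\ y = g l u].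

Lemma exc_hutch g h K1 K2 B (e C : R) : 0 <= e -> 0 <= C ->
  edist_bounded K1 K2 B -> K2 !=set0 ->
  (forall l u v, tuples K1 u -> tuples K2 v -> edist (g l u) (h l v) <= e + C * dmax u v) ->
  exc (hutch g K1) (hutch h K2) <= e + C * exc K1 K2.
Proof.
move=> e_ge0 C_ge0 bdd K2n0 close; have exc_ge0 := exc_ge0 bdd K2n0.
apply: exc_le => [|_ [l [u [K1u ->]]]]; first by rewrite addr_ge0 ?mulr_ge0.
apply: edist_set_le_near => d d_gt0; set d' := d / (C + 1).
have C1_gt0 : 0 < C + 1 by rewrite ltr_wpDl.
have d'_gt0 : 0 < d' by rewrite divr_gt0.
have /choice[v K2v] j : exists y, K2 y /\ edist (u j) y < exc K1 K2 + d'.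
  by have [y ? ?] := exc_approx bdd K2n0 (K1u j) d'_gt0; exists y.
exists (h l v); first by exists l, v; split => // j; case: (K2v j).
apply: le_trans (close l u v K1u (fun j => (K2v j).1)) _; rewrite -addrA lerD2l.
have Cd'_le : C * d' <= d by rewrite mulrCA ger_pMr // ler_pdivrMr // mul1r lerDl.
have le_dmax : dmax u v <= exc K1 K2 + d'.
  by apply: dmax_le => [|j]; [rewrite addr_ge0 // ltW | exact: ltW (K2v j).2].
by rewrite (le_trans (ler_wpM2l C_ge0 le_dmax)) // mulrDr lerD2l.
Qed.

Lemma hausdorff_hutch g h K1 K2 B (e C : R) : 0 <= e -> 0 <= C ->
  edist_bounded K1 K2 B -> K1 !=set0 -> K2 !=set0 ->
  (forall l u v, tuples K1 u -> tuples K2 v -> edist (g l u) (h l v) <= e + C * dmax u v) ->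
  hausdorff (hutch g K1) (hutch h K2) <= e + C * hausdorff K1 K2.
Proof.
move=> e_ge0 C_ge0 bdd K1n0 K2n0 close; rewrite /hausdorff ge_max; apply/andP; split.
  apply: le_trans (exc_hutch e_ge0 C_ge0 bdd K2n0 close) _.
  by rewrite lerD2l ler_wpM2l // le_max lexx.
have close' l v u : tuples K2 v -> tuples K1 u -> edist (h l v) (g l u) <= e + C * dmax v u.
  by move=> K2v K1u; rewrite edist_sym dmax_sym close.
apply: le_trans (exc_hutch e_ge0 C_ge0 (edist_bounded_sym bdd) K1n0 close') _.
by rewrite lerD2l ler_wpM2l // le_max lexx orbT.
Qed.

End Hutchinson.

Section Lipschitz.
Variables (R : realType) (M p : nat) (D : R).
Implicit Types g : ('I_p -> pt R M) -> pt R M.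

Lemma lipc_on_liprate g : (exists c, lipc_on D g c) -> lipc_on D g (liprate D g).
Proof.
move=> [c0 [c0_ge0 lip0]]; split; first by apply: lb_le_inf; [exists c0 | move=> c []].
move=> u v cu cv; have [d0|d_neq0] := eqVneq (dmax u v) 0.
  by have := lip0 u v cu cv; rewrite d0 !mulr0.
have d_gt0 : 0 < dmax u v by rewrite lt_def d_neq0 dmax_ge0.
rewrite -ler_pdivrMr //; apply: lb_le_inf; first by exists c0.
by move=> c [_ lip]; rewrite ler_pdivrMr // lip.
Qed.

Lemma lipc_on_le g c c' : lipc_on D g c -> c <= c' -> lipc_on D g c'.
Proof.
move=> [c_ge0 lip] le_cc'; split=> [|u v cu cv]; first exact: le_trans le_cc'.
exact: le_trans (lip u v cu cv) (ler_wpM2r (dmax_ge0 u v) le_cc').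
Qed.

End Lipschitz.

Lemma affine_recurrence_le (R : numDomainType) (h e : nat -> R) (C c : R) :
  0 <= C -> h 0%N <= c -> (forall k, h k.+1 <= e k.+1 + C * h k) ->
  forall k, h k <= \sum_(0 <= i < k) C ^+ i * e (k - i)%N + C ^+ k * c.
Proof.
move=> C_ge0 h0 hS; elim=> [|k IHk]; first by rewrite big_geq // add0r mul1r.
apply: le_trans (hS k) _; rewrite big_nat_recl // mul1r subn0 -addrA lerD2l.
have -> : \sum_(0 <= i < k) C ^+ i.+1 * e (k.+1 - i.+1)%N + C ^+ k.+1 * c =
    C * (\sum_(0 <= i < k) C ^+ i * e (k - i)%N + C ^+ k * c).
  rewrite mulrDr big_distrr /= exprS -mulrA; congr (_ + _).
  by apply: eq_bigr => i _; rewrite subSS exprS mulrA.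
exact: ler_wpM2l.
Qed.

Section GridAlgorithm.
Variables (R : realType) (M p L : nat) (D : R) (f : 'I_L -> ('I_p -> pt R M) -> pt R M).
Variables (n : nat -> nat) (K0 : set (pt R M)).
Hypotheses (D_gt0 : 0 < D) (n_gt0 : forall k, (0 < n k.+1)%N) (K0_cube : K0 `<=` cube D).
Hypothesis f_cube : forall l u, tuples (cube D) u -> cube D (f l u).
Local Notation Atil := (Atil f D n K0).

Lemma AtilS k : Atil k.+1 = hutch (fun l u => grid D (n k.+1) (f l u)) (Atil k).
Proof. by []. Qed.

Lemma Atil_cube k : Atil k `<=` cube D.
Proof.
elim: k => [|k IHk] //= _ [l [u [Au ->]]].
by apply: grid_cube => //; apply: f_cube => j; apply: IHk.
Qed.

Lemma Atil_neq0 (l0 : 'I_L) k : K0 !=set0 -> Atil k !=set0.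
Proof.
move=> [x K0x]; elim: k => [|k [y Aky]]; first by exists x.
by exists (grid D (n k.+1) (f l0 (fun=> y))), l0, (fun=> y); split.
Qed.

Lemma hausdorff_AtilS (A : set (pt R M)) (C : R) k :
  0 <= C -> (forall l, lipc_on D (f l) C) ->
  A !=set0 -> A `<=` cube D -> A = hutch f A -> Atil k !=set0 ->
  hausdorff (Atil k.+1) A <= D * Num.sqrt M%:R / (n k.+1)%:R + C * hausdorff (Atil k) A.
Proof.
move=> C_ge0 f_lip An0 A_cube A_fix Akn0; rewrite AtilS {1}A_fix.
have bdd := edist_bounded_cube (ltW D_gt0) (@Atil_cube k) A_cube.
apply: (hausdorff_hutch _ C_ge0 bdd Akn0 An0).
  by rewrite divr_ge0 ?ler0n // mulr_ge0 ?sqrtr_ge0 // ltW.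
move=> l u v Au Av; apply: le_trans (edist_triangle _ (f l u) _) _.
apply: lerD; first exact: edist_grid_le.
by apply: (f_lip l).2 => j; [apply: Atil_cube (Au j) | apply: A_cube (Av j)].
Qed.

End GridAlgorithm.

Theorem mainTheorem1 (R : realType) (D : R) (M L p : nat)
  (f : 'I_L -> ('I_p -> pt R M) -> pt R M)
  (A : set (pt R M)) (n : nat -> nat) (K0 : set (pt R M)) :
  0 < D -> (1 <= L)%N -> (1 <= M)%N -> (2 <= p)%N ->
  (* each f_l maps X^p into X and is a contraction *)
  (forall l u, tuples (cube D) u -> cube D (f l u)) ->
  (forall l, exists c, lipc_on D (f l) c) ->
  (forall l, liprate D (f l) < 1) ->
  (* A is the attractor *)
  A !=set0 -> compact A -> A `<=` cube D ->
  A = [set y | exists (l : 'I_L) (u : 'I_p -> pt R M), tuples A u /\ y = f l u] ->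
  (* grid parameters and initial set *)
  (forall k, (1 <= k)%N -> (0 < n k)%N) ->
  K0 !=set0 -> finite_set K0 -> K0 `<=` cube D ->
  let C := \big[Num.max/0]_(l < L) liprate D (f l) in
  let eps := fun k => D * Num.sqrt M%:R / (n k)%:R in
  forall k : nat, (1 <= k)%N ->
    hausdorff (Atil f D n K0 k) A <=
      \sum_(0 <= i < k) C ^+ i * eps (k - i)%N + C ^+ k * (D * Num.sqrt M%:R).
Proof.
move=> D_gt0 L_gt0 _ _ f_cube f_lip _ An0 _ A_cube A_fix n_gt0 K0n0 _ K0_cube C eps k _.
have l0 : 'I_L := Ordinal L_gt0.
have C_lip l : lipc_on D (f l) C.
  exact: lipc_on_le (lipc_on_liprate (f_lip l)) (le_bigmax _ _ l).
have C_ge0 : 0 <= C := (C_lip l0).1.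
have n_gt0S j : (0 < n j.+1)%N := n_gt0 j.+1 isT.
apply: (affine_recurrence_le (h := fun k => hausdorff (Atil f D n K0 k) A)) => // [|j].
  exact: hausdorff_le K0n0 An0 (edist_bounded_cube (ltW D_gt0) K0_cube A_cube).
apply: hausdorff_AtilS => //; exact: Atil_neq0.
Qed.
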